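(* Let $a,b$ be distinct assertion variables. The implication $$(-*a*b)\wedge(a*a)\ \Rightarrow\ (-*a*a)\vee(-*-*b)$$ holds in the unary interpretation (for every $\eta$ and every $\rho:\mathsf{AVar}\to\mathsf{IRel}_1$), but fails in the binary interpretation: with $\rho(a)=\{([1],[])\}^\uparrow\cup\{([2],[2])\}^\uparrow$ and $\rho(b)=\mathsf{Heap}^2$, the pair $([1,2],[2])$ belongs to the binary meaning of the left side but not to that of the right side.
   Context: $\mathsf{Heap}$: finite partial functions $\mathsf{PosInt}\to\mathsf{Int}$; $[]$ the empty heap; $[m]$ the heap storing $0$ at location $m$ and nothing else, and $[m_1,m_2]=[m_1]\cdot[m_2]$ for distinct $m_1,m_2$; $g\sqsubseteq h$ means $h$ extends $g$; $h\cdot g$ union of disjoint heaps; componentwise on $\mathsf{Heap}^n$; $S^\uparrow$ is the upward closure of a set $S$ of tuples. $\mathsf{IRel}_n$: upward closed subsets of $\mathsf{Heap}^n$; $p*q=\{\mathbf f\cdot\mathbf g\mid\mathbf f\in p,\mathbf g\in q,\text{componentwise disjoint}\}$; $\Delta_n(X)=\{(h_1,\dots,h_n)\mid\exists f\in X.\ \forall k.\ f\sqsubseteq h_k\}$ for $X\subseteq\mathsf{Heap}$. Assertion semantics with $\eta$ and $\rho:\mathsf{AVar}\to\mathsf{IRel}_n$: primitive assertions mean $\Delta_n$ of their standard set of heaps, variables $a$ mean $\rho(a)$, $\wedge,\vee,*$ mean $\cap,\cup,*$, $\exists$ means union over integer values. The assertion $-$ abbreviates $\exists x,y.\,x\hookrightarrow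 y$, whose standard set of heaps is the set of heaps with non-empty domain. Binary: $n=2$; unary: $n=1$. *)

From mathcomp Require Import all_boot.
From Stdlib Require Import ZArith PArith List.
Set Implicit Arguments. Unset Strict Implicit. Unset Printing Implicit Defensive.

(** Heaps: finite partial functions PosInt -> Int. *)
Definition heap : Type :=
  {h : positive -> option Z | exists l : list positive, forall p, h p <> None -> List.In p l}.
Definition hfun (h : heap) : positive -> option Z := proj1_sig h.

Definition hsub (g h : heap) : Prop :=
  forall p v, hfun g p = Some v -> hfun h p = Some v.
Definition hdisj (g h : heap) : Prop :=
  forall p, hfun g p = None \/ hfun h p = None.
Definition hunion_is (h f g : heap) : Prop :=
  forall p, hfun h p = match hfun f p with Some v => Some v | None => hfun g p end.

Definition htuple (n : nat) : Type := 'I_n -> heap.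

(** upward closed subsets of Heap^n (elements of IRel_n) *)
Definition upclosed (n : nat) (S : htuple n -> Prop) : Prop :=
  forall f h : htuple n, S f -> (forall k, hsub (f k) (h k)) -> S h.

Definition Delta (n : nat) (X : heap -> Prop) : htuple n -> Prop :=
  fun h => exists f, X f /\ forall k, hsub f (h k).

Definition sstar (n : nat) (p q : htuple n -> Prop) : htuple n -> Prop :=
  fun h => exists f g, p f /\ q g /\
    forall k, hdisj (f k) (g k) /\ hunion_is (h k) (f k) (g k).

Definition sand (n : nat) (p q : htuple n -> Prop) : htuple n -> Prop :=
  fun h => p h /\ q h.
Definition sor (n : nat) (p q : htuple n -> Prop) : htuple n -> Prop :=
  fun h => p h \/ q h.

Definition pointsto_std (x y : Z) : heap -> Prop :=
  fun h => exists p : positive, x = Zpos p /\ hfun h p = Some y.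

(** the assertion  −  :=  ∃x,y. x ↪ y  *)
Definition dash (n : nat) : htuple n -> Prop :=
  fun h => exists x y : Z, @Delta n (pointsto_std x y) h.

(** LHS and RHS of the implication, interpreted with ρ(a)=A, ρ(b)=B *)
Definition lhs17 (n : nat) (A B : htuple n -> Prop) : htuple n -> Prop :=
  sand (sstar (sstar (@dash n) A) B) (sstar A A).
Definition rhs17 (n : nat) (A B : htuple n -> Prop) : htuple n -> Prop :=
  sor (sstar (sstar (@dash n) A) A) (sstar (sstar (@dash n) (@dash n)) B).

Lemma hcell_fin (m : positive) : exists l : list positive,
  forall p, (if Pos.eqb p m then Some 0%Z else None) <> None -> List.In p l.
Proof.
  exists (m :: nil) => p; case E: (Pos.eqb p m) => // _.
  by move/Pos.eqb_eq: E => ->; left.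
Qed.
Definition hcell (m : positive) : heap :=
  exist _ (fun p => if Pos.eqb p m then Some 0%Z else None) (hcell_fin m).

Lemma hcell2_fin (m1 m2 : positive) : exists l : list positive,
  forall p, (if Pos.eqb p m1 then Some 0%Z else if Pos.eqb p m2 then Some 0%Z else None)
              <> None -> List.In p l.
Proof.
  exists (m1 :: m2 :: nil) => p.
  case E1: (Pos.eqb p m1); first by move/Pos.eqb_eq: E1 => -> _; left.
  case E2: (Pos.eqb p m2) => // _; by move/Pos.eqb_eq: E2 => ->; right; left.
Qed.
Definition hcell2 (m1 m2 : positive) : heap :=
  exist _ (fun p => if Pos.eqb p m1 then Some 0%Z else if Pos.eqb p m2 then Some 0%Z else None)
        (hcell2_fin m1 m2).

Lemma hemp_fin : exists l : list positive,
  forall p, (fun _ : positive => @None Z) p <> None -> List.In p l.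
Proof. by exists nil. Qed.
Definition hemp : heap := exist _ (fun _ => None) hemp_fin.

Definition pair2 (h1 h2 : heap) : htuple 2 :=
  fun k => if nat_of_ord k == 0 then h1 else h2.

Definition upset1 (n : nat) (t : htuple n) : htuple n -> Prop :=
  fun h => forall k, hsub (t k) (h k).

Definition rhoA2 : htuple 2 -> Prop :=
  fun h => upset1 (pair2 (hcell 1) hemp) h \/ upset1 (pair2 (hcell 2) (hcell 2)) h.
Definition rhoB2 : htuple 2 -> Prop := fun _ => True.

From mathcomp Require Import all_boot.
From Stdlib Require Import ZArith PArith Classical.

Set Implicit Arguments.
Unset Strict Implicit.

(* An
   upward closed A ⊆ Heap^1 either contains the empty heap, and is then all
   of Heap^1 (so B ⊆ A and (-*a*b) ⊆ (-*a*a)), or consists of non-empty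
   heaps only, and then A ⊆ "-" (so (-*a*b) ⊆ (-*-*b)).  Both cases follow
   from monotonicity of the separating conjunction.

   In Heap^2 the second alternative fails: ([1],[]) ∈ ρ(a) is
   non-empty without being in "-", whose elements must share a cell in both
   components.  For h = ([1,2],[2]) every splitting of h into three disjoint
   pieces d·x·y with d ∈ "-" puts the cell 2 of the second component into d;
   then x, y ∈ ρ(a) must both be above ([1],[]) and clash on the cell 1,
   while x, y ∈ "-" would both need the cell 2. *)

Definition hsplit (h f g : heap) : Prop := hdisj f g /\ hunion_is h f g.

Lemma hsub_refl (h : heap) : hsub h h.
Proof. by []. Qed.

Lemma hsub_trans (f g h : heap) : hsub f g -> hsub g h -> hsub f h.
Proof. by move=> Hfg Hgh p v /Hfg /Hgh. Qed.

Lemma hsub_empty (f g : heap) : (forall p, hfun f p = None) -> hsub f g.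
Proof. by move=> Ef p v; rewrite Ef. Qed.

Lemma hsplit_sub (h f g : heap) : hsplit h f g -> hsub f h /\ hsub g h.
Proof.
move=> [Hd Hu]; split=> p v Hp; rewrite Hu.
- by rewrite Hp.
- by case: (Hd p) => E; [rewrite E | rewrite E in Hp].
Qed.

Lemma hsplit_comm (h f g : heap) : hsplit h f g -> hsplit h g f.
Proof.
move=> [Hd Hu]; split=> p; first by case: (Hd p); [right | left].
by rewrite Hu; case: (Hd p) => ->; case: (hfun f p); case: (hfun g p).
Qed.

Lemma hsplit_emp_r (h : heap) : hsplit h h hemp.
Proof. by split=> p; [right | rewrite /=; case: (hfun h p)]. Qed.

Lemma hsplit_emp_l (h : heap) : hsplit h hemp h.
Proof. exact/hsplit_comm/hsplit_emp_r. Qed.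

Lemma hsplit_hcell2 (m1 m2 : positive) :
  m1 <> m2 -> hsplit (hcell2 m1 m2) (hcell m1) (hcell m2).
Proof.
move=> Hm; split=> p; rewrite /hfun /=.
- case: (Pos.eqb_spec p m1) => [-> | _]; last by left.
  by right; case: (Pos.eqb_spec m1 m2).
- by case: (Pos.eqb p m1).
Qed.

Lemma hdisj_sub_l (f f' g : heap) : hsub f f' -> hdisj f' g -> hdisj f g.
Proof.
move=> Hf Hd p; case E: (hfun f p) => [v|]; last by left.
by case: (Hd p) => [|->]; [rewrite (Hf _ _ E) | right].
Qed.

Lemma hdisj_shared (f g : heap) (p : positive) :
  hfun f p <> None -> hfun g p <> None -> ~ hdisj f g.
Proof. by move=> Hf Hg /(_ p) []. Qed.

Lemma sstar_mono (n : nat) (p p' q q' : htuple n -> Prop) (h : htuple n) :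
  sstar p q h -> (forall t, p t -> p' t) -> (forall t, q t -> q' t) ->
  sstar p' q' h.
Proof. by move=> [f [g [Hf [Hg Hfg]]]] Hp Hq; exists f, g; split; [apply: Hp | split; [apply: Hq|]]. Qed.

Lemma sstar3E (n : nat) (p q r : htuple n -> Prop) (h : htuple n) :
  sstar (sstar p q) r h ->
  exists x y z, p x /\ q y /\ r z /\ forall k,
    [/\ hsub (x k) (h k), hsub (y k) (h k), hsub (z k) (h k) &
        [/\ hdisj (x k) (y k), hdisj (x k) (z k) & hdisj (y k) (z k)]].
Proof.
move=> [f [z [[x [y [Hx [Hy Hxy]]]] [Hz Hfz]]]].
exists x, y, z; do 3 split=> //; move=> k.
have [Sxf Syf] := hsplit_sub (Hxy k).
have [Sfh Szh] := hsplit_sub (Hfz k).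
have Dfz : hdisj (f k) (z k) := (Hfz k).1.
split; [exact: hsub_trans Sxf Sfh | exact: hsub_trans Syf Sfh | exact: Szh |].
split; [exact: (Hxy k).1 | exact: hdisj_sub_l Sxf Dfz | exact: hdisj_sub_l Syf Dfz].
Qed.

Lemma dash_intro (n : nat) (f : heap) (p : positive) (v : Z) (t : htuple n) :
  hfun f p = Some v -> (forall k, hsub f (t k)) -> dash t.
Proof. by move=> Hp Hf; exists (Zpos p), v, f; split=> //; exists p. Qed.

Lemma dash_below_cell (n : nat) (d : htuple n) (k : 'I_n) (m : positive) :
  dash d -> hsub (d k) (hcell m) -> hfun (d k) m <> None.
Proof.
move=> [x [y [f [[p [_ Hp]] Hf]]]] Hm.
have Hdk := Hf k p y Hp; have := Hm p y Hdk; rewrite [hfun (hcell m) p]/hfun /=.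
by case: (Pos.eqb_spec p m) => // <- _; rewrite Hdk.
Qed.

Lemma upset1_upclosed (n : nat) (t : htuple n) : upclosed (upset1 t).
Proof. by move=> f h Hf Hfh k; apply: hsub_trans (Hf k) (Hfh k). Qed.

Lemma sor_upclosed (n : nat) (p q : htuple n -> Prop) :
  upclosed p -> upclosed q -> upclosed (sor p q).
Proof. by move=> Up Uq f h [Hf | Hf] Hfh; [left; apply: Up Hf _ | right; apply: Uq Hf _]. Qed.

Lemma upclosed_empty_full (n : nat) (A : htuple n -> Prop) (e : htuple n) :
  upclosed A -> A e -> (forall k p, hfun (e k) p = None) -> forall t, A t.
Proof. by move=> UA Ae Ee t; apply: UA Ae _ => k; apply: hsub_empty. Qed.

Lemma unary_dash (t : htuple 1) (p : positive) :
  hfun (t ord0) p <> None -> dash t.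
Proof.
case E: (hfun (t ord0) p) => [v|] // _.
by apply: (dash_intro E) => k; rewrite (ord1 k); apply: hsub_refl.
Qed.

Lemma unary_dichotomy (A : htuple 1 -> Prop) :
  upclosed A -> (forall t, A t) \/ (forall t, A t -> dash t).
Proof.
move=> UA; case: (classic (exists t, A t /\ hfun (t ord0) =1 fun _ => None)).
- move=> [e [Ae Ee]]; left; apply: (upclosed_empty_full UA Ae) => k p.
  by rewrite (ord1 k) Ee.
- move=> Hne; right=> t At; apply: NNPP => Nd; apply: Hne; exists t; split=> // p.
  by apply: NNPP => Hp; apply: Nd; apply: unary_dash Hp.
Qed.

Lemma unary_implication (A B : htuple 1 -> Prop) :
  upclosed A -> forall h, sstar (sstar (@dash 1) A) B h -> rhs17 A B h.
Proof.
move=> UA h Hh; case: (unary_dichotomy UA) => [Afull | Adash].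
- by left; apply: (sstar_mono Hh) => // t _; apply: Afull.
- by right; apply: (sstar_mono Hh) => // t Ht; apply: (sstar_mono Ht).
Qed.

Definition k0 : 'I_2 := @Ordinal 2 0 erefl.
Definition k1 : 'I_2 := @Ordinal 2 1 erefl.

Lemma ord2_ind (P : 'I_2 -> Prop) : P k0 -> P k1 -> forall k, P k.
Proof.
move=> P0 P1 [[|[|m]] Hm] //.
- by rewrite (_ : Ordinal Hm = k0) //; apply: val_inj.
- by rewrite (_ : Ordinal Hm = k1) //; apply: val_inj.
Qed.

Lemma rhoA2_upclosed : upclosed rhoA2.
Proof. exact/sor_upclosed/upset1_upclosed/upset1_upclosed. Qed.

Lemma rhoA2_cells (a : htuple 2) :
  rhoA2 a -> hfun (a k0) 1%positive <> None \/ hfun (a k1) 2%positive <> None.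
Proof. by case=> Ha; [left; rewrite (Ha k0 1%positive 0%Z) | right; rewrite (Ha k1 2%positive 0%Z)]. Qed.

Lemma hsplit12 : hsplit (hcell2 1 2) (hcell 1) (hcell 2).
Proof. exact: hsplit_hcell2. Qed.

(* ([1,2],[2]) = ([2],[2]) · ([1],[]) with ([2],[2]) ∈ "-" and ([1],[]) ∈ ρ(a),
   and also = ([1],[]) · ([2],[2]) with both factors in ρ(a). *)
Lemma binary_lhs : lhs17 rhoA2 rhoB2 (pair2 (hcell2 1 2) (hcell 2)).
Proof.
have A1 : rhoA2 (pair2 (hcell 1) hemp) by left=> k; apply: hsub_refl.
have A2 : rhoA2 (pair2 (hcell 2) (hcell 2)) by right=> k; apply: hsub_refl.
split.
- exists (pair2 (hcell2 1 2) (hcell 2)), (pair2 hemp hemp); split; last first.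
    by split=> //; apply: ord2_ind; apply: hsplit_emp_r.
  exists (pair2 (hcell 2) (hcell 2)), (pair2 (hcell 1) hemp); split.
    by apply: (@dash_intro _ (hcell 2) 2%positive 0%Z) => //; apply: ord2_ind.
  split=> //; apply: ord2_ind; [exact: hsplit_comm hsplit12 | exact: hsplit_emp_r].
- exists (pair2 (hcell 1) hemp), (pair2 (hcell 2) (hcell 2)); do 2 split=> //.
  by apply: ord2_ind; [exact: hsplit12 | exact: hsplit_emp_l].
Qed.

Lemma binary_rhs_fails : ~ rhs17 rhoA2 rhoB2 (pair2 (hcell2 1 2) (hcell 2)).
Proof.
case=> /sstar3E [d [x [y [Hd [Hx [Hy Hk]]]]]];
  have [Sd1 Sx1 _ [Dx1 Dy1 _]] := Hk k1;
  have Hd2 := dash_below_cell Hd Sd1.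
- (* x, y ∈ ρ(a) avoid the cell 2 on the right, so both own the cell 1 on the left *)
  have left1 b : rhoA2 b -> hdisj (d k1) (b k1) -> hfun (b k0) 1%positive <> None.
    by move=> /rhoA2_cells [// | Hb2] /(hdisj_shared Hd2 Hb2).
  have [_ _ _ [_ _ Dxy0]] := Hk k0.
  exact: hdisj_shared (left1 x Hx Dx1) (left1 y Hy Dy1) Dxy0.
- (* both factors in "-" would need the cell 2 on the right *)
  exact: hdisj_shared Hd2 (dash_below_cell Hx Sx1) Dx1.
Qed.

Theorem mainTheorem17 :
  (* unary interpretation: the implication holds for every ρ : AVar -> IRel_1
     (a, b distinct, so ρ(a), ρ(b) are arbitrary independent elements of IRel_1) *)
  (forall A B : htuple 1 -> Prop, upclosed A -> upclosed B ->
     forall h : htuple 1, lhs17 A B h -> rhs17 A B h)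
  /\
  (* binary interpretation: the specific counterexample *)
  (upclosed rhoA2 /\ upclosed rhoB2 /\
   lhs17 rhoA2 rhoB2 (pair2 (hcell2 1 2) (hcell 2)) /\
   ~ rhs17 rhoA2 rhoB2 (pair2 (hcell2 1 2) (hcell 2))).
Proof.
split.
- by move=> A B UA _ h [Hh _]; apply: unary_implication Hh.
- split; first exact: rhoA2_upclosed.
  split; first by [].
  split; [exact: binary_lhs | exact: binary_rhs_fails].
Qed.
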